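(* Let $S$ be a Del Pezzo surface with smooth effective anticanonical divisor $E$, let $\beta\in H_2(S,\mathbb{Z})$ be a non-zero effective primitive class, and $w=E\cdot\beta$. Let $\{N_S[dw]\}_{d\ge1}$, $\{I_{K_S}(d\beta)\}_{d\ge1}$ be sequences of rational numbers with $N_S[dw]=(-1)^{dw+1}dw\,I_{K_S}(d\beta)$ for all $d\ge1$, and define rational sequences $\{n_{d\beta}\}$, $\{n_S[dw]\}$ by $$\sum_{l\ge1}I_{K_S}(l\beta)q^l=\sum_{d\ge1}n_{d\beta}\sum_{k\ge1}\frac{1}{k^3}q^{dk},\qquad \sum_{l\ge1}N_S[lw]q^l=\sum_{d\ge1}n_S[dw]\sum_{k\ge1}\frac{1}{k^2}\binom{k(dw-1)-1}{k-1}q^{dk}.$$ Fix a positive integer $N$ and define the $N\times N$ matrix $C$ by: for $1\le s,t\le N$ with $t\mid s$, $$C_{st}=\frac{(-1)^{sw}}{(s/t)^2}\sum_{k\in I(s/t)}(-1)^{\omega(s/(kt))}(-1)^{ktw}\binom{k(tw-1)-1}{k-1},$$ and $C_{st}=0$ if $t\nmid s$. Then $$C\cdot\big[n_S[dw]\big]_{1\le d\le N}=\big[(-1)^{dw+1}\,dw\,n_{d\beta}\big]_{1\le d\le N}$$ (as column vectors). Moreover, $C$ is lower triangular with determinant $1$, and consequently $C$ has integer entries if and only if $C^{-1}$ has integer entries.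
   Context: For a positive integer $n$, $\omega(n)$ is the number of distinct primes dividing $n$, and $I(n)=\{k\in\mathbb{N}: k\mid n \text{ and } n/k \text{ is square-free}\}$. Binomial coefficients $\binom{n}{m}$ with $n\in\mathbb{Z}$, $m\ge0$ mean $n(n-1)\cdots(n-m+1)/m!$. *)

From HB Require Import structures.
From mathcomp Require Import all_boot all_order all_algebra.
Set Implicit Arguments. Unset Strict Implicit. Unset Printing Implicit Defensive.
Import Order.TTheory GRing.Theory Num.Theory.
Local Open Scope ring_scope.

Definition omega (n : nat) : nat := size (primes n).

Definition squarefree (n : nat) : bool :=
  (0 < n)%N && all (fun p => ~~ (p ^ 2 %| n)%N) (primes n).

Definition Iset (n : nat) : seq nat :=
  [seq k <- divisors n | squarefree (n %/ k)%N].

Definition binz (n : int) (m : nat) : rat :=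
  (\prod_(i < m) (n%:~R - (i : nat)%:R)) / (m`!)%:R.

Definition Centry (w s t : nat) : rat :=
  if (t %| s)%N then
    (-1) ^+ (s * w) / ((s %/ t)%:R ^+ 2) *
    \sum_(k <- Iset (s %/ t)%N)
       (-1) ^+ omega (s %/ (k * t)) * (-1) ^+ (k * t * w) *
       binz ((k : nat)%:Z * ((t * w)%:Z - 1) - 1) k.-1
  else 0.

(* the N x N matrix C, index i : 'I_N corresponds to s = i+1 *)
Definition Cmat (w N : nat) : 'M[rat]_N :=
  \matrix_(i < N, j < N) Centry w i.+1 j.+1.

From HB Require Import structures.
From mathcomp Require Import all_boot all_order all_algebra ring.
Import Order.TTheory GRing.Theory Num.Theory.
Local Open Scope ring_scope.

(* Write sigma_d = (-1)^(dw).  Multiplying the definition of I by l^3 and using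
   the relation between N_S and I gives sigma_d d^2 N_S[dw] = -w Sum_(e | d) e^3 n_e,
   so Moebius inversion writes (-1)^(sw+1) s w n_s as
   sigma_s s^-2 Sum_(d | s) mu(s/d) sigma_d d^2 N_S[dw].  Substituting the
   multiple-cover expansion of N_S[dw] in terms of the n_S[tw], t | d, and
   exchanging the two divisor sums (d = k t) yields Sum_(t | s) C_st n_S[tw]:
   the sum over I(s/t) in C_st is the support of mu.  C_st vanishes unless
   t | s and C_ss = 1, so C is unitriangular, and the adjugate formula shows
   that the inverse of an integral matrix of determinant 1 is integral. *)

Section DivisorSums.
Variable R : nmodType.

Lemma sum_divisors_multiples (G : nat -> R) s t : (0 < s)%N -> (t %| s)%N ->
  \sum_(k <- divisors (s %/ t)) G k = \sum_(d <- divisors s | (t %| d)%N) G (d %/ t)%N.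
Proof.
move=> s0 ts; have t0 : (0 < t)%N := dvdn_gt0 s0 ts.
have st0 : (0 < s %/ t)%N by rewrite divn_gt0 // dvdn_leq.
have multiples : perm_eq [seq (t * k)%N | k <- divisors (s %/ t)%N]
                         [seq d <- divisors s | (t %| d)%N].
  apply: uniq_perm; rewrite ?filter_uniq ?divisors_uniq //.
    rewrite map_inj_uniq ?divisors_uniq // => x y /eqP.
    by rewrite eqn_pmul2l // => /eqP.
  move=> d; rewrite mem_filter -dvdn_divisors //; apply/mapP/idP.
    case=> k; rewrite -dvdn_divisors // => kst ->.
    by rewrite dvdn_mulr //= -(divnK ts) mulnC dvdn_pmul2r.
  case/andP=> td ds; exists (d %/ t)%N; last by rewrite mulnC divnK.
  by rewrite -dvdn_divisors // dvdn_divLR // divnK.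
rewrite -[RHS]big_filter -(perm_big _ multiples) big_map.
by apply: eq_bigr => k _; rewrite mulKn.
Qed.

Lemma sum_divisors_exchange (F : nat -> nat -> R) s : (0 < s)%N ->
  \sum_(d <- divisors s) \sum_(e <- divisors d) F d e =
  \sum_(e <- divisors s) \sum_(d <- divisors s | (e %| d)%N) F d e.
Proof.
move=> s0; under [RHS]eq_bigr do rewrite big_mkcond.
rewrite exchange_big /=; apply: eq_big_seq => d.
rewrite -dvdn_divisors // => ds; have d0 : (0 < d)%N := dvdn_gt0 s0 ds.
rewrite -big_mkcond -[RHS]big_filter; apply: perm_big.
apply: uniq_perm; rewrite ?filter_uniq ?divisors_uniq //.
move=> e; rewrite mem_filter -!dvdn_divisors //.
by apply/idP/andP => [ed|[]//]; rewrite (dvdn_trans ed ds).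
Qed.

Lemma sum_divisors_divisors (F : nat -> nat -> R) s : (0 < s)%N ->
  \sum_(d <- divisors s) \sum_(t <- divisors d) F d t =
  \sum_(t <- divisors s) \sum_(k <- divisors (s %/ t)) F (k * t)%N t.
Proof.
move=> s0; rewrite sum_divisors_exchange //; apply: eq_big_seq => t.
rewrite -dvdn_divisors // => ts; rewrite sum_divisors_multiples //.
by apply: eq_bigr => d td; rewrite divnK.
Qed.

Lemma sum_divisors_codivisors (F : nat -> R) m : (0 < m)%N ->
  \sum_(d <- divisors m) F (m %/ d)%N = \sum_(d <- divisors m) F d.
Proof.
move=> m0; have codivK d : (d %| m)%N -> (m %/ (m %/ d))%N = d.
  by move=> dm; rewrite divnA // mulKn.
rewrite -(big_map (fun d => m %/ d)%N xpredT).
apply: perm_big; apply: uniq_perm; rewrite ?divisors_uniq //.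
  rewrite map_inj_in_uniq ?divisors_uniq // => x y.
  by rewrite -!dvdn_divisors // => xm ym e; rewrite -(codivK x) // e codivK.
move=> d; rewrite -dvdn_divisors //; apply/mapP/idP.
  by case=> k; rewrite -dvdn_divisors // => km ->; apply: dvdn_div.
move=> dm; exists (m %/ d)%N; last by rewrite codivK.
by rewrite -dvdn_divisors // dvdn_div.
Qed.

End DivisorSums.

Lemma squarefreeP n : (0 < n)%N ->
  reflect (forall q, prime q -> ~~ (q ^ 2 %| n)%N) (squarefree n).
Proof.
move=> n0; rewrite /squarefree n0; apply: (iffP allP) => [sqf q q_pr|sqf q].
  have [qn|] := boolP (q %| n)%N; first by rewrite sqf // mem_primes q_pr n0.
  by apply: contra => /(dvdn_trans (dvdn_exp2l q (isT : (1 <= 2)%N))).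
by rewrite mem_primes => /and3P[q_pr _ _]; apply: sqf.
Qed.

Lemma squarefreeM_prime p j : prime p -> ~~ (p %| j)%N -> (0 < j)%N ->
  squarefree (p * j) = squarefree j.
Proof.
move=> p_pr pj j0; have pj0 : (0 < p * j)%N by rewrite muln_gt0 prime_gt0.
apply/idP/idP => [/(squarefreeP _ pj0) sqf | /(squarefreeP _ j0) sqf].
  by apply/(squarefreeP _ j0) => q q_pr; apply: contra (sqf q q_pr); apply: dvdn_mull.
apply/(squarefreeP _ pj0) => q q_pr.
have [->|qp] := eqVneq q p; first by rewrite expnS expn1 dvdn_pmul2l ?prime_gt0.
by rewrite Gauss_dvdr ?sqf // coprimeXl // prime_coprime // dvdn_prime2.
Qed.

Lemma squarefreeM_prime_dvd p j : prime p -> (p %| j)%N -> squarefree (p * j) = false.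
Proof.
move=> p_pr pj; apply/negbTE; have [->|pj0] := posnP (p * j)%N; first by [].
apply/negP => /(squarefreeP _ pj0)/(_ p p_pr).
by rewrite expnS expn1 dvdn_pmul2l ?prime_gt0 // pj.
Qed.

Lemma omegaM_prime p j : prime p -> ~~ (p %| j)%N -> (0 < j)%N ->
  omega (p * j) = (omega j).+1.
Proof.
move=> p_pr pj j0; rewrite /omega -[(size _).+1]/(size (p :: primes j)).
apply/perm_size/uniq_perm; first exact: primes_uniq.
  by rewrite /= primes_uniq mem_primes (negbTE pj) !andbF.
by move=> q; rewrite in_cons primesM ?(prime_gt0 p_pr) // primes_prime // inE.
Qed.

Definition moebius {R : pzRingType} (n : nat) : R :=
  if squarefree n then (-1) ^+ omega n else 0.

Section Moebius.
Variable R : pzRingType.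

Lemma moebiusM_prime p j : prime p -> ~~ (p %| j)%N -> (0 < j)%N ->
  moebius (p * j)%N = - moebius j :> R.
Proof.
move=> p_pr pj j0; rewrite /moebius squarefreeM_prime // omegaM_prime //.
by case: (squarefree j); rewrite ?oppr0 // exprS mulN1r.
Qed.

Lemma moebiusM_prime_dvd p j : prime p -> (p %| j)%N -> moebius (p * j)%N = 0 :> R.
Proof. by move=> p_pr pj; rewrite /moebius squarefreeM_prime_dvd. Qed.

Lemma sum_moebius m : (0 < m)%N ->
  \sum_(k <- divisors m) moebius k = (m == 1)%:R :> R.
Proof.
move=> m0; have [|m_gt1|->] := ltngtP m 1; last by rewrite big_seq1.
  by rewrite ltnS leqn0 => /eqP m_eq0; rewrite m_eq0 in m0.
set p := pdiv m; have p_pr : prime p by apply: pdiv_prime.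
have pm : (p %| m)%N by apply: pdiv_dvd.
set m' := (m %/ p)%N; have m_eq : m = (p * m')%N by rewrite mulnC divnK.
have m'0 : (0 < m')%N by move: m0; rewrite m_eq muln_gt0 => /andP[].
have coprime_part : \sum_(k <- divisors m | ~~ (p %| k)%N) moebius k =
                    \sum_(j <- divisors m' | ~~ (p %| j)%N) moebius j :> R.
  rewrite -big_filter -[RHS]big_filter; apply: perm_big.
  apply: uniq_perm; rewrite ?filter_uniq ?divisors_uniq // => k.
  rewrite !mem_filter -!dvdn_divisors //; case: (boolP (p %| k)%N) => //= pk.
  by rewrite m_eq Gauss_dvdr // coprime_sym prime_coprime.
rewrite (bigID (fun k => p %| k)%N) /= coprime_part.
rewrite (eq_bigr (fun k => moebius (p * (k %/ p))%N)); last first.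
  by move=> k pk; rewrite mulnC divnK.
rewrite -(sum_divisors_multiples _ (fun j => moebius (p * j)%N)) // -/m'.
rewrite (bigID (fun j => p %| j)%N) /= big1 => [|j pj]; last exact: moebiusM_prime_dvd.
rewrite add0r -big_split big_seq_cond big1 /= ?(gtn_eqF m_gt1) // => j /andP[jm pj].
by rewrite moebiusM_prime ?addNr // (dvdn_gt0 m'0) // dvdn_divisors.
Qed.

Lemma moebius_inversion (f g : nat -> R) :
  (forall n, (0 < n)%N -> g n = \sum_(d <- divisors n) f d) ->
  forall n, (0 < n)%N -> f n = \sum_(d <- divisors n) moebius (n %/ d)%N * g d.
Proof.
move=> gE n n0.
rewrite (eq_big_seq (fun d => \sum_(e <- divisors d) moebius (n %/ d)%N * f e)); last first.
  by move=> d; rewrite -dvdn_divisors // => dn; rewrite gE ?(dvdn_gt0 n0 dn) // mulr_sumr.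
rewrite sum_divisors_divisors //.
rewrite (eq_big_seq (fun t => ((n %/ t)%N == 1)%:R * f t)); last first.
  move=> t; rewrite -dvdn_divisors // => tn.
  have nt0 : (0 < n %/ t)%N by rewrite divn_gt0 ?(dvdn_gt0 n0) // dvdn_leq.
  under eq_bigr do rewrite mulnC divnMA.
  by rewrite -mulr_suml sum_divisors_codivisors // sum_moebius.
rewrite (bigD1_seq n) ?divisors_uniq ?divisors_id //= divnn n0 mul1r.
rewrite big_seq_cond big1 ?addr0 //.
move=> t /andP[]; rewrite -dvdn_divisors // => tn t_neq_n.
suff -> : (n %/ t == 1)%N = false by rewrite mul0r.
by apply: contraNF t_neq_n => /eqP nt; rewrite -(divnK tn) nt mul1n.
Qed.

End Moebius.

Lemma CentryE w s t : (0 < s)%N -> (t %| s)%N ->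
  Centry w s t = (-1) ^+ (s * w) / (s %/ t)%N%:R ^+ 2 *
    \sum_(k <- divisors (s %/ t)) moebius (s %/ t %/ k)%N * (-1) ^+ (k * t * w) *
      binz (k%:Z * ((t * w)%:Z - 1) - 1) k.-1.
Proof.
move=> s0 ts; have st0 : (0 < s %/ t)%N by rewrite divn_gt0 ?(dvdn_gt0 s0) // dvdn_leq.
rewrite /Centry ts /Iset big_filter big_mkcond; congr (_ * _); apply: eq_big_seq => k.
rewrite -dvdn_divisors // => kst; rewrite /moebius [(k * t)%N]mulnC divnMA.
by case: squarefree; rewrite ?mul0r.
Qed.

Lemma Centry_diag w s : (0 < s)%N -> Centry w s s = 1.
Proof.
move=> s0; rewrite /Centry dvdnn divnn s0 /= big_seq1 mul1n divnn s0.
rewrite /binz big_ord0 expr0 mul1r /= expr1n invr1 mulr1.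
by rewrite -exprD -signr_odd oddD addbb.
Qed.

Lemma Cmat_row_sum w N (x : nat -> rat) (i : 'I_N) :
  \sum_(j < N) Cmat w N i j * x j.+1 = \sum_(t <- divisors i.+1) Centry w i.+1 t * x t.
Proof.
pose F t := if (t %| i.+1)%N then Centry w i.+1 t * x t else 0.
rewrite (eq_bigr (fun j : 'I_N => F j.+1)); last first.
  by move=> j _; rewrite /F mxE /Centry; case: ifP; rewrite ?mul0r.
rewrite -[LHS]add0r -[0 in LHS]/(F 0%N) -(big_ord_recl _ (fun t => F t)) /F.
rewrite -big_mkcond -(big_mkord (fun t => t %| i.+1)%N (fun t => Centry w i.+1 t * x t)).
rewrite -big_filter.
apply: perm_big; apply: uniq_perm; rewrite ?filter_uniq ?iota_uniq ?divisors_uniq //.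
move=> t; rewrite mem_filter mem_index_iota -dvdn_divisors //.
case: (boolP (t %| i.+1)%N) => //= ti.
by rewrite ltnS (leq_trans (dvdn_leq _ ti) (ltn_ord i)).
Qed.

Lemma det_int (R : archiNumDomainType) n (A : 'M[R]_n) :
  (forall i j, A i j \is a Num.int) -> \det A \is a Num.int.
Proof.
move=> A_int; rewrite /determinant rpred_sum // => p _.
by rewrite rpredM ?rpredX ?rpredN ?rpred1 // rpred_prod.
Qed.

Lemma invmx_int (R : archiNumFieldType) n (A : 'M[R]_n) : (\det A)^-1 \is a Num.int ->
  (forall i j, A i j \is a Num.int) -> forall i j, invmx A i j \is a Num.int.
Proof.
move=> detV_int A_int i j; rewrite /invmx; case: ifP => // _.
rewrite !mxE rpredM // /cofactor rpredM ?rpredX ?rpredN ?rpred1 // det_int // => k l.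
by rewrite !mxE.
Qed.

Lemma int_invmx_int (R : archiNumFieldType) n (A : 'M[R]_n) : \det A = 1 ->
  (forall i j, A i j \is a Num.int) <-> (forall i j, invmx A i j \is a Num.int).
Proof.
move=> detA; split; first by apply: invmx_int; rewrite detA invr1.
have A_unit : A \in unitmx by rewrite unitmxE detA unitr1.
by rewrite -{2}(invmxK A); apply: invmx_int; rewrite det_inv invrK detA.
Qed.

Lemma mulr_signS (R : pzRingType) n : (-1) ^+ n * (-1) ^+ n.+1 = -1 :> R.
Proof. by rewrite exprS mulN1r mulrN -expr2 sqrr_sign. Qed.

Section DegreeSeries.
Variables (w : nat) (NS I nb nS : nat -> rat).
Hypothesis NS_I : forall d, (0 < d)%N -> NS d = (-1) ^+ (d * w).+1 * (d * w)%:R * I d.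
Hypothesis I_nb : forall l, (0 < l)%N ->
  I l = \sum_(d <- divisors l) nb d / ((l %/ d)%:R ^+ 3).
Hypothesis NS_nS : forall l, (0 < l)%N ->
  NS l = \sum_(d <- divisors l) nS d * ((l %/ d)%:R ^+ 2)^-1 *
           binz (((l %/ d)%N : nat)%:Z * ((d * w)%:Z - 1) - 1) (l %/ d).-1.

Lemma nb_moebius s : (0 < s)%N ->
  s%:R ^+ 3 * nb s = \sum_(d <- divisors s) moebius (s %/ d)%N * (d%:R ^+ 3 * I d).
Proof.
apply: (moebius_inversion _ (fun e => e%:R ^+ 3 * nb e)) => l l0.
rewrite I_nb // mulr_sumr; apply: eq_big_seq => d; rewrite -dvdn_divisors // => dl.
have ld0 : (l %/ d)%N%:R != 0 :> rat.
  by rewrite pnatr_eq0 -lt0n divn_gt0 ?(dvdn_gt0 l0) // dvdn_leq.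
by rewrite -{1}(divnK dl) natrM exprMn; field.
Qed.

Lemma signed_sq_NS d : (0 < d)%N ->
  (-1) ^+ (d * w) * d%:R ^+ 2 * NS d = - (w%:R * (d%:R ^+ 3 * I d)).
Proof.
move=> d0; rewrite NS_I // natrM.
transitivity ((-1) ^+ (d * w) * (-1) ^+ (d * w).+1 * (w%:R * (d%:R ^+ 3 * I d))).
  by ring.
by rewrite mulr_signS mulN1r.
Qed.

Lemma nb_NS s : (0 < s)%N ->
  (-1) ^+ (s * w).+1 * (s * w)%:R * nb s = (-1) ^+ (s * w) / s%:R ^+ 2 *
    \sum_(d <- divisors s) moebius (s %/ d)%N * ((-1) ^+ (d * w) * d%:R ^+ 2 * NS d).
Proof.
move=> s0.
rewrite (eq_big_seq (fun d => - w%:R * (moebius (s %/ d)%N * (d%:R ^+ 3 * I d)))).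
  rewrite -mulr_sumr -nb_moebius // exprS mulN1r natrM.
  have s_neq0 : s%:R != 0 :> rat by rewrite pnatr_eq0 -lt0n.
  by field.
move=> d; rewrite -dvdn_divisors // => ds.
by rewrite signed_sq_NS ?(dvdn_gt0 s0 ds) // mulrN mulNr mulrCA.
Qed.

Lemma Cmat_identity s : (0 < s)%N ->
  \sum_(t <- divisors s) Centry w s t * nS t = (-1) ^+ (s * w).+1 * (s * w)%:R * nb s.
Proof.
move=> s0; rewrite nb_NS //.
rewrite [in RHS](eq_big_seq (fun d => \sum_(t <- divisors d) moebius (s %/ d)%N *
  ((-1) ^+ (d * w) * d%:R ^+ 2 * (nS t * ((d %/ t)%N%:R ^+ 2)^-1 *
     binz (((d %/ t)%N : nat)%:Z * ((t * w)%:Z - 1) - 1) (d %/ t).-1)))); last first.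
  move=> d; rewrite -dvdn_divisors // => ds.
  by rewrite NS_nS ?(dvdn_gt0 s0 ds) // !mulr_sumr.
rewrite sum_divisors_divisors // mulr_sumr; apply: eq_big_seq => t.
rewrite -dvdn_divisors // => ts; have t0 : (0 < t)%N := dvdn_gt0 s0 ts.
have st0 : (0 < s %/ t)%N by rewrite divn_gt0 // dvdn_leq.
rewrite CentryE // [LHS](mulrC _ (nS t)) !mulr_sumr; apply: eq_big_seq => k.
rewrite -dvdn_divisors // => kst; have k0 : (0 < k)%N := dvdn_gt0 st0 kst.
have -> : (s %/ (k * t) = s %/ t %/ k)%N by rewrite mulnC divnMA.
rewrite mulnK // natrM.
have -> : s%:R = (s %/ t)%N%:R * t%:R :> rat by rewrite -natrM divnK.
have [k_neq0 t_neq0] : k%:R != 0 :> rat /\ t%:R != 0 :> rat by rewrite !pnatr_eq0 -!lt0n.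
have st_neq0 : (s %/ t)%N%:R != 0 :> rat by rewrite pnatr_eq0 -lt0n.
by field; apply/and3P.
Qed.

End DegreeSeries.

Theorem lemma2p1 (w : nat) (hw : (0 < w)%N)
  (NS I nb nS : nat -> rat)
  (hNI : forall d, (0 < d)%N ->
     NS d = (-1) ^+ (d * w).+1 * (d * w)%:R * I d)
  (hI : forall l, (0 < l)%N ->
     I l = \sum_(d <- divisors l) nb d / ((l %/ d)%:R ^+ 3))
  (hN : forall l, (0 < l)%N ->
     NS l = \sum_(d <- divisors l)
              nS d * ((l %/ d)%:R ^+ 2)^-1 *
              binz (((l %/ d)%N : nat)%:Z * ((d * w)%:Z - 1) - 1) (l %/ d).-1)
  (N : nat) (hN0 : (0 < N)%N) :
  (forall i : 'I_N,
     \sum_(j < N) Cmat w N i j * nS j.+1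
       = (-1) ^+ (i.+1 * w).+1 * (i.+1 * w)%:R * nb i.+1)
  /\ (forall i j : 'I_N, (i < j)%N -> Cmat w N i j = 0)
  /\ \det (Cmat w N) = 1
  /\ ((forall i j, Cmat w N i j \is a Num.int) <->
      (forall i j, invmx (Cmat w N) i j \is a Num.int)).
Proof.
have C_trig (i j : 'I_N) : (i < j)%N -> Cmat w N i j = 0.
  by move=> ij; rewrite mxE /Centry gtnNdvd.
have C_det : \det (Cmat w N) = 1.
  rewrite det_trig; last by apply/is_trig_mxP.
  by rewrite big1 // => i _; rewrite mxE Centry_diag.
split; first by move=> i; rewrite Cmat_row_sum (Cmat_identity _ _ _ _ _ hNI hI hN).
by split; [|split; [|exact: int_invmx_int]].
Qed.
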